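(* Under the standing assumptions, $\tau(\theta)>0$ for every $\theta\in(\pi/2,\pi)$.
   Context: Standing assumptions: $a,b\in\mathbb{R}$ with $b>0$, $1+a+b>0$, $9-27a+b>0$, $2-8a+8a^2+ab\ne0$, $b+1-a\ne0$. Let $f^*(\zeta,\theta)=(\zeta+2\cos\theta)(2\zeta\cos\theta+1)+b\zeta-a(\zeta+2\cos\theta)^3$ and $f(\zeta,\theta)=\zeta^3f^*(1/\zeta,\theta)=\zeta(1+2\zeta\cos\theta)(2\cos\theta+\zeta)+b\zeta^2-a(1+2\zeta\cos\theta)^3$. Under these assumptions, for each $\theta\in(\pi/2,\pi)$ the polynomial $f^*(\cdot,\theta)$ has exactly one real zero in $(-1,1)$; denote it $w(\theta)$ and write $\zeta(\theta)=1/w(\theta)$ (taken as $\infty$ when $w(\theta)=0$). Define $\tau(\theta)=-w(\theta)-2\cos\theta$. *)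

From Stdlib Require Import Reals Lra.
Open Scope R_scope.

Definition standing (a b : R) : Prop :=
  b > 0 /\ 1 + a + b > 0 /\ 9 - 27 * a + b > 0 /\
  2 - 8 * a + 8 * a ^ 2 + a * b <> 0 /\ b + 1 - a <> 0.

Definition fstar (a b zeta theta : R) : R :=
  (zeta + 2 * cos theta) * (2 * zeta * cos theta + 1) + b * zeta
  - a * (zeta + 2 * cos theta) ^ 3.

(* tau expressed in terms of the zero w = w(theta) *)
Definition tau_of (w theta : R) : R := - w - 2 * cos theta.

From Stdlib Require Import Reals Lra Psatz.
Open Scope R_scope.

(* Argue by contradiction: if [tau <= 0] then [u := w + 2 cos theta >= 0], and
   [fstar] rewrites as [u (1 + 2 w cos theta) + b w - a u^3].  Since
   [a < (9 + b)/27], the cubic term is beaten by [u^3/3 <= u (1 + 2 w cos theta)]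
   together with [b u^3 / 27 < b w], so [fstar] would be positive. *)

Lemma fstar_shift_pos (a b c w : R) :
  0 < b -> 9 - 27 * a + b > 0 -> c < 0 -> w < 1 -> 0 <= w + 2 * c ->
  0 < (w + 2 * c) * (2 * w * c + 1) + b * w - a * (w + 2 * c) ^ 3.
Proof.
  intros Hb Ha Hc Hw1 Hu.
  set (u := w + 2 * c) in *.
  assert (Hw : 0 < w) by (unfold u in Hu; lra).
  assert (Hc2 : -1 / 2 < c) by (unfold u in Hu; lra).
  assert (Hu1 : u < w) by (unfold u; lra).
  assert (Hquad : u ^ 2 <= 3 * (1 + 2 * w * c)) by (unfold u; nra).
  assert (Hcube : u ^ 3 < w) by nra.
  assert (Hu3 : 0 <= u ^ 3) by (apply pow_le; exact Hu).
  assert (Hlin : u ^ 3 <= 3 * (u * (2 * w * c + 1))) by nra.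
  assert (Hcoef : a * u ^ 3 <= (9 + b) / 27 * u ^ 3)
    by (apply Rmult_le_compat_r; lra).
  nra.
Qed.

Theorem mainTheorem10 (a b : R) (Hab : standing a b) (theta w : R) :
  PI / 2 < theta < PI ->
  -1 < w < 1 ->
  fstar a b w theta = 0 ->
  tau_of w theta > 0.
Proof.
  intros Htheta [_ Hw1] Hf.
  destruct Hab as [Hb [_ [H9 _]]].
  assert (Hc : cos theta < 0) by (apply cos_lt_0; lra).
  unfold tau_of; apply Rnot_le_lt; intros Htau.
  pose proof (fstar_shift_pos a b (cos theta) w Hb H9 Hc Hw1 ltac:(lra)) as Hpos.
  unfold fstar in Hf; lra.
Qed.
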